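(* Let $f:(\mathbb R^2,q)\to(\mathbb R^3,p)$ be a smooth germ with a corank 1 singularity at $q$ whose curvature parabola $\Delta_p$ is a non-degenerate parabola or a half-line, and let $(u,v)$ be a coordinate system with $f_u(q)\neq0$, $f_v(q)=0$, $|f_u(q)|=|f_{vv}(q)|=1$ and $\langle f_u(q),f_{vv}(q)\rangle=0$. Then $$\kappa_a(p)=\big(\langle f_{uu},f_{vv}\rangle-\langle f_{uv},f_{vv}\rangle^2\big)(q).$$
   Context: $T_pM=\operatorname{im}df_q$, $N_pM$ its orthogonal complement with a fixed orientation. First fundamental form $I(X,Y)=\langle df_qX,df_qY\rangle$; second fundamental form $II$: the symmetric bilinear map $T_q\mathbb R^2\times T_q\mathbb R^2\to N_pM$ with $II(\partial_u,\partial_u)=f_{uu}(q)^\perp$, $II(\partial_u,\partial_v)=f_{uv}(q)^\perp$, $II(\partial_v,\partial_v)=f_{vv}(q)^\perp$ ($\perp$ = orthogonal projection to $N_pM$). Curvature parabola $\Delta_p=\{II(X,X): I(X,X)=1\}\subset N_pM$. Axial vector $v_a$: if $\Delta_p$ is a non-degenerate parabola, the unit vector along its axis of symmetry pointing to its interior; if $\Delta_p$ is a half-line, the unit vector in the direction in which the half-line extends. Axial curvature $\kappa_a(p)=\min\{\langle II(X,X),v_a\rangle: I(X,X)=1\}$. *)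

From HB Require Import structures.
From mathcomp Require Import all_boot all_order all_algebra.
From mathcomp Require Import all_classical all_reals all_analysis.
Set Implicit Arguments. Unset Strict Implicit. Unset Printing Implicit Defensive.
Import Order.TTheory GRing.Theory Num.Theory.
Import numFieldNormedType.Exports.
Local Open Scope classical_set_scope.
Local Open Scope ring_scope.

Section Defs.
Variable R : realType.

Definition dot (a b : 'rV[R]_3) : R := \sum_(i < 3) a 0 i * b 0 i.

Definition eu : 'rV[R]_2 := delta_mx 0 0.
Definition ev : 'rV[R]_2 := delta_mx 0 1.

Fixpoint iterD (vs : seq 'rV[R]_2) (f : 'rV[R]_2 -> 'rV[R]_3) :
    'rV[R]_2 -> 'rV[R]_3 :=
  if vs is v :: vs' then 'D_v (iterD vs' f) else f.

Definition smooth (f : 'rV[R]_2 -> 'rV[R]_3) : Prop :=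
  forall (vs : seq 'rV[R]_2) (x : 'rV[R]_2), differentiable (iterD vs f) x.

Variables (f : 'rV[R]_2 -> 'rV[R]_3) (q : 'rV[R]_2).

Definition f_u := 'D_eu f q.
Definition f_v := 'D_ev f q.
Definition f_uu := 'D_eu ('D_eu f) q.
Definition f_uv := 'D_ev ('D_eu f) q.
Definition f_vv := 'D_ev ('D_ev f) q.

(* Jacobian matrix of f at q (rows f_u, f_v); corank 1 = rank 1 *)
Definition jacobian : 'M[R]_(2, 3) := col_mx f_u f_v.
Definition corank1 : Prop := \rank jacobian = 1%N.

Definition df (X : 'rV[R]_2) : 'rV[R]_3 := 'D_X f q.

Definition I_ff (X Y : 'rV[R]_2) : R := dot (df X) (df Y).

Definition tangent_space : set 'rV[R]_3 := range df.
Definition normal_space : set 'rV[R]_3 :=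
  [set n | forall t, tangent_space t -> dot n t = 0].

Definition perp (w : 'rV[R]_3) : 'rV[R]_3 :=
  xget 0 [set n | normal_space n /\ tangent_space (w - n)].

(* second fundamental form: symmetric bilinear extension of
   II(du,du) = f_uu^perp, II(du,dv) = f_uv^perp, II(dv,dv) = f_vv^perp *)
Definition II_ff (X Y : 'rV[R]_2) : 'rV[R]_3 :=
  (X 0 0 * Y 0 0) *: perp f_uu
  + (X 0 0 * Y 0 1 + X 0 1 * Y 0 0) *: perp f_uv
  + (X 0 1 * Y 0 1) *: perp f_vv.

Definition curvature_parabola : set 'rV[R]_3 :=
  [set II_ff X X | X in [set X | I_ff X X = 1]].

End Defs.

(* A subset of R^3 is a non-degenerate parabola with axis direction v
   (unit, pointing to the interior) *)
Definition parabola_with_axis (R : realType) (D : set 'rV[R]_3) (v : 'rV[R]_3)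
  : Prop :=
  exists (c e : 'rV[R]_3) (a : R),
    [/\ 0 < a, dot e e = 1, dot v v = 1, dot e v = 0 &
        D = [set c + s *: e + (a * s ^+ 2) *: v | s in [set: R]]].

Definition halfline_with_direction (R : realType) (D : set 'rV[R]_3)
  (v : 'rV[R]_3) : Prop :=
  exists c : 'rV[R]_3,
    dot v v = 1 /\ D = [set c + s *: v | s in [set s : R | 0 <= s]].

Definition nondegenerate_parabola (R : realType) (D : set 'rV[R]_3) : Prop :=
  exists v, parabola_with_axis D v.
Definition half_line (R : realType) (D : set 'rV[R]_3) : Prop :=
  exists v, halfline_with_direction D v.

Definition axial_vector (R : realType) (D : set 'rV[R]_3) (v : 'rV[R]_3)
  : Prop := parabola_with_axis D v \/ halfline_with_direction D v.

Definition is_min (R : realType) (S : set R) (m : R) : Prop :=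
  S m /\ forall y, S y -> m <= y.

Definition is_axial_curvature (R : realType) (f : 'rV[R]_2 -> 'rV[R]_3)
  (q : 'rV[R]_2) (va : 'rV[R]_3) (kappa : R) : Prop :=
  is_min [set dot (II_ff f q X X) va | X in [set X | I_ff f q X X = 1]] kappa.

(* Since f_v(q) = 0, the tangent line is spanned by the unit vector f_u, so
   I(X,X) = X_u^2 and the normal projection is w |-> w - <w,f_u> f_u, which fixes
   f_vv.  With a = f_uu^perp and b = f_uv^perp, the curvature parabola is therefore
   the curve t |-> II(du + t dv) = a + 2t b + t^2 f_vv (X_u = -1 gives the same
   points).  Comparing coefficients of polynomial identities in t shows that if
   this curve lies on a non-degenerate parabola or on a half-line, the axial vector
   must be the unit vector f_vv.  Finally, for X_u^2 = 1,
     <II(X,X), f_vv> = (X_v + X_u <f_uv,f_vv>)^2 + <f_uu,f_vv> - <f_uv,f_vv>^2,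
   whose minimum is the claimed value. *)

From Pilot Require Import Defs.
From HB Require Import structures.
From mathcomp Require Import all_boot all_order all_algebra.
From mathcomp Require Import all_classical all_reals all_analysis.
From mathcomp Require Import ring lra.
Import Order.TTheory GRing.Theory Num.Theory.
Import numFieldNormedType.Exports.
Set Implicit Arguments. Unset Strict Implicit. Unset Printing Implicit Defensive.
Local Open Scope classical_set_scope.
Local Open Scope ring_scope.

Section InnerProduct.
Variable R : realType.
Implicit Types (x y z : 'rV[R]_3) (k : R).

Lemma dotC x y : dot x y = dot y x.
Proof. by apply: eq_bigr => i _; rewrite mulrC. Qed.

Lemma dotDl x y z : dot (x + y) z = dot x z + dot y z.
Proof. by rewrite /dot -big_split; apply: eq_bigr => i _; rewrite mxE mulrDl. Qed.

Lemma dotZl k x y : dot (k *: x) y = k * dot x y.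
Proof. by rewrite /dot mulr_sumr; apply: eq_bigr => i _; rewrite mxE mulrA. Qed.

Lemma dotNl x y : dot (- x) y = - dot x y.
Proof. by rewrite -scaleN1r dotZl mulN1r. Qed.

Lemma dotBl x y z : dot (x - y) z = dot x z - dot y z.
Proof. by rewrite dotDl dotNl. Qed.

Lemma dotZr k x y : dot x (k *: y) = k * dot x y.
Proof. by rewrite dotC dotZl dotC. Qed.

Lemma dotBr x y z : dot x (y - z) = dot x y - dot x z.
Proof. by rewrite dotC dotBl !(dotC x). Qed.

Lemma dot_ge0 x : 0 <= dot x x.
Proof. by apply: sumr_ge0 => i _; rewrite -expr2 sqr_ge0. Qed.

Lemma dot_eq0 x : dot x x = 0 -> x = 0.
Proof.
move=> x0; apply/rowP => j; rewrite mxE.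
have := psumr_eq0P (fun i _ => sqr_ge0 (x 0 i)) x0 (i := j) isT.
by move/eqP; rewrite mulf_eq0 orbb => /eqP.
Qed.

Lemma unit_dot_eq1 x y : dot x x = 1 -> dot y y = 1 -> dot x y = 1 -> y = x.
Proof.
move=> xx yy xy; apply/eqP; rewrite -subr_eq0; apply/eqP/dot_eq0.
by rewrite !(dotBl, dotBr) xx yy xy dotC xy; ring.
Qed.

Lemma dot_eq1_of_sqrt x : Num.sqrt (dot x x) = 1 -> dot x x = 1.
Proof. by move=> h; rewrite -[LHS]sqr_sqrtr ?dot_ge0 // h expr1n. Qed.

End InnerProduct.

Section RealPolynomialIdentities.
Variable R : realFieldType.
Implicit Types A B C P Q S : R.

Lemma quartic_eq0 (c0 c1 c2 c3 c4 : R) :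
    (forall t, c0 + c1 * t + c2 * t ^+ 2 + c3 * t ^+ 3 + c4 * t ^+ 4 = 0) ->
  [/\ c0 = 0, c1 = 0, c2 = 0, c3 = 0 & c4 = 0].
Proof.
move=> h; move: (h 0) (h 1) (h (-1)) (h 2) (h (-2)).
rewrite !(expr0n, expr1n, exprS, expr0) /=.
by split; lra.
Qed.

Lemma quadratic_coef2_eq A B C A' B' C' :
  (forall t, A + B * t + C * t ^+ 2 = A' + B' * t + C' * t ^+ 2) -> C = C'.
Proof.
move=> h.
have /quartic_eq0[_ _ /subr0_eq // _ _] :
    forall t, A - A' + (B - B') * t + (C - C') * t ^+ 2 + 0 * t ^+ 3 + 0 * t ^+ 4 = 0.
  by move=> t; have := h t; lra.
Qed.

Lemma quadratic_eq_scaled_sqr (a A B C P Q S : R) : 0 < a ->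
    (forall t, A + B * t + C * t ^+ 2 = a * (P + Q * t + S * t ^+ 2) ^+ 2) ->
  S = 0 /\ C = a * Q ^+ 2.
Proof.
move=> a0 h.
have h0 t : A + B * t + C * t ^+ 2 - a * (P + Q * t + S * t ^+ 2) ^+ 2 = 0.
  by rewrite h subrr.
have /quartic_eq0[_ _ /subr0_eq C_eq _ /eqP] :
    forall t, A - a * P ^+ 2 + (B - 2 * a * P * Q) * t
      + (C - a * (Q ^+ 2 + 2 * P * S)) * t ^+ 2 + (- 2 * a * Q * S) * t ^+ 3
      + (- a * S ^+ 2) * t ^+ 4 = 0.
  by move=> t; rewrite -(h0 t); ring.
rewrite mulf_eq0 oppr_eq0 gt_eqF //= sqrf_eq0 => /eqP S0.
by split => //; rewrite C_eq S0; ring.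
Qed.

Lemma quadratic_ge0_coef2_ge0 A B C :
  (forall t, 0 <= A + B * t + C * t ^+ 2) -> 0 <= C.
Proof.
move=> h; rewrite leNgt; apply/negP => C0.
(* T >= 1 and -C T > |A|, so A + C T^2 < 0. *)
pose T := 1 + (`|A| + 1) / - C.
have T1 : 1 <= T by rewrite lerDl divr_ge0 // ltW // oppr_gt0.
have CT : - C * T = - C + `|A| + 1.
  by rewrite /T mulrDr mulr1 mulrCA divff ?mulr1 ?addrA // oppr_eq0 lt_eqF.
have sum_ge0 : 0 <= A + C * T ^+ 2.
  by have := h T; have := h (- T); rewrite sqrrN mulrN; lra.
have : C * T ^+ 2 <= C - `|A| - 1.
  rewrite expr2 mulrA -[C * T]opprK -mulNr CT.
  have := normr_ge0 A; nra.
have := ler_norm A; lra.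
Qed.

End RealPolynomialIdentities.

Section AxialVector.
Variable R : realType.

Definition quadratic_curve (a b c : 'rV[R]_3) (t : R) : 'rV[R]_3 :=
  a + (2 * t) *: b + t ^+ 2 *: c.

Lemma dot_quadratic_curve a b c t w :
  dot (quadratic_curve a b c t) w = dot a w + 2 * dot b w * t + dot c w * t ^+ 2.
Proof. by rewrite !dotDl !dotZl; ring. Qed.

Lemma quadratic_curveBl a b c o t :
  quadratic_curve a b c t - o = quadratic_curve (a - o) b c t.
Proof. by rewrite /quadratic_curve addrAC (addrAC a). Qed.

Lemma dot_translate (o e v w : 'rV[R]_3) (s r : R) :
  dot (o + s *: e + r *: v - o) w = s * dot e w + r * dot v w.
Proof. by rewrite addrAC (addrAC o) subrr add0r dotDl !dotZl. Qed.

Variables (D : set 'rV[R]_3) (a b c : 'rV[R]_3).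
Hypotheses (cc : dot c c = 1) (D_curve : forall t, D (quadratic_curve a b c t)).

Lemma parabola_axis_quadratic_curve v : parabola_with_axis D v -> v = c.
Proof.
case=> o [e [al [al0 ee vv ev D_eq]]].
(* Comparing coefficients in t: the t^4 term forces <c,e> = 0, then the t^2
   terms give <c,v> = al (2 <b,e>)^2 >= 0 and <c,c> = <c,v>^2. *)
pose sigma t := dot (a - o) e + 2 * dot b e * t + dot c e * t ^+ 2.
have coord t w : dot (quadratic_curve (a - o) b c t) w =
    sigma t * dot e w + al * sigma t ^+ 2 * dot v w.
  have := D_curve t; rewrite D_eq => -[s _ s_eq].
  have <- : s = sigma t.
    by rewrite /sigma -dot_quadratic_curve -quadratic_curveBl -s_eq dot_translate
               ee dotC ev mulr1 mulr0 addr0.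
  by rewrite -quadratic_curveBl -s_eq dot_translate mulrA.
have [ce0 cv] : dot c e = 0 /\ dot c v = al * (2 * dot b e) ^+ 2.
  apply: (quadratic_eq_scaled_sqr (A := dot (a - o) v) (B := 2 * dot b v)) => //.
  by move=> t; rewrite -dot_quadratic_curve coord ev vv mulr0 add0r mulr1.
have cvc : dot c c = dot c v * dot v c.
  apply: (quadratic_coef2_eq (A := dot (a - o) c) (B := 2 * dot b c)
    (A' := dot (a - o) e * dot e c + al * dot (a - o) e ^+ 2 * dot v c)
    (B' := 2 * dot b e * dot e c + 2 * al * dot (a - o) e * (2 * dot b e) * dot v c)) => t.
  by rewrite -dot_quadratic_curve coord /sigma ce0 cv; ring.
apply: unit_dot_eq1 cc vv _.
have cv0 : 0 <= dot c v by rewrite cv mulr_ge0 ?sqr_ge0 ?ltW.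
by apply/eqP; rewrite -(sqrp_eq1 cv0) expr2 {2}dotC -cvc cc.
Qed.

Lemma halfline_direction_quadratic_curve v : halfline_with_direction D v -> v = c.
Proof.
case=> o [vv D_eq].
have coord t : 0 <= dot (quadratic_curve (a - o) b c t) v /\ forall w,
    dot (quadratic_curve (a - o) b c t) w = dot (quadratic_curve (a - o) b c t) v * dot v w.
  have := D_curve t; rewrite D_eq => -[s /= s0 s_eq].
  have tr w : dot (quadratic_curve (a - o) b c t) w = s * dot v w.
    by rewrite -quadratic_curveBl -s_eq addrAC subrr add0r dotZl.
  by rewrite !tr vv mulr1.
have cv0 : 0 <= dot c v.
  apply: (quadratic_ge0_coef2_ge0 (A := dot (a - o) v) (B := 2 * dot b v)) => t.
  by rewrite -dot_quadratic_curve; case: (coord t).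
have cvc : dot c c = dot c v * dot v c.
  apply: (quadratic_coef2_eq (A := dot (a - o) c) (B := 2 * dot b c)
    (A' := dot (a - o) v * dot v c) (B' := 2 * dot b v * dot v c)) => t.
  by rewrite -dot_quadratic_curve (coord t).2 dot_quadratic_curve; ring.
apply: unit_dot_eq1 cc vv _.
by apply/eqP; rewrite -(sqrp_eq1 cv0) expr2 {2}dotC -cvc cc.
Qed.

Lemma axial_vector_quadratic_curve v : axial_vector D v -> v = c.
Proof.
by case; [exact: parabola_axis_quadratic_curve | exact: halfline_direction_quadratic_curve].
Qed.

End AxialVector.

Section UnitSlope.
Variable R : realType.

Definition slope_vec (t : R) : 'rV[R]_2 := eu R + t *: ev R.

Lemma slope_vec_u t : slope_vec t 0 0 = 1.
Proof. by rewrite !mxE /= mulr0 addr0. Qed.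

Lemma slope_vec_v t : slope_vec t 0 1 = t.
Proof. by rewrite !mxE /= mulr1 add0r. Qed.

Lemma row2E (X : 'rV[R]_2) : X = X 0 0 *: eu R + X 0 1 *: ev R.
Proof.
apply/rowP => j; rewrite !mxE /=.
have [->|->] : j = 0 \/ j = 1 by case: j => -[|[|//]] ?; [left | right]; apply/val_inj.
  by rewrite mulr1 mulr0 addr0.
by rewrite mulr0 mulr1 add0r.
Qed.

Lemma is_min_quadratic (A B : R) :
  is_min [set X 0 0 ^+ 2 * A + 2 * (X 0 0 * X 0 1) * B + X 0 1 ^+ 2
         | X in [set X : 'rV[R]_2 | X 0 0 ^+ 2 = 1]] (A - B ^+ 2).
Proof.
split.
  exists (slope_vec (- B)); first by rewrite /= slope_vec_u expr1n.
  by rewrite slope_vec_u slope_vec_v; ring.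
move=> _ [X /= X2 <-].
have := sqr_ge0 (X 0 1 + X 0 0 * B).
have -> : (X 0 1 + X 0 0 * B) ^+ 2 =
    X 0 1 ^+ 2 + 2 * (X 0 0 * X 0 1) * B + X 0 0 ^+ 2 * B ^+ 2 by ring.
rewrite X2; lra.
Qed.

End UnitSlope.

Section FundamentalForms.
Variables (R : realType) (f : 'rV[R]_2 -> 'rV[R]_3) (q : 'rV[R]_2).
Hypotheses (f_diff : differentiable f q) (f_v0 : f_v f q = 0).
Hypothesis (f_u_unit : dot (f_u f q) (f_u f q) = 1).

Lemma dfE X : df f q X = X 0 0 *: f_u f q.
Proof.
rewrite /df {1}(row2E X) deriveE // linearD !linearZ /= -!deriveE //.
by rewrite -[ 'D_(ev R) f q]/(f_v f q) f_v0 scaler0 addr0.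
Qed.

Lemma I_ffE X : I_ff f q X X = X 0 0 ^+ 2.
Proof. by rewrite /I_ff dfE dotZl dotZr f_u_unit mulr1 expr2. Qed.

Lemma perpE w : perp f q w = w - dot w (f_u f q) *: f_u f q.
Proof.
set u := f_u f q.
have normalE n : Defs.normal_space f q n <-> dot n u = 0.
  split => [/(_ u) | nu _ [X _ <-]]; last by rewrite dfE dotZr nu mulr0.
  by apply; exists (eu R) => //; rewrite dfE mxE /= scale1r.
have tangentE x : tangent_space f q x <-> exists k, x = k *: u.
  split => [[X _ <-] | [k ->]]; first by exists (X 0 0); rewrite dfE.
  by exists (k *: eu R) => //; rewrite dfE !mxE /= mulr1.
have [/normalE n_u /tangentE [k w_n]] :
    [set n | Defs.normal_space f q n /\ tangent_space f q (w - n)] (perp f q w).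
  apply: xgetPex; exists (w - dot w u *: u); split.
    by apply/normalE; rewrite dotBl dotZl f_u_unit mulr1 subrr.
  by apply/tangentE; exists (dot w u); rewrite subKr.
have perp_w : perp f q w = w - k *: u by rewrite -w_n subKr.
rewrite perp_w; congr (w - _ *: u).
by move: n_u; rewrite perp_w dotBl dotZl f_u_unit mulr1 => /subr0_eq.
Qed.

Hypothesis (f_u_perp_vv : dot (f_u f q) (f_vv f q) = 0).

Lemma dot_perp_vv w : dot (perp f q w) (f_vv f q) = dot w (f_vv f q).
Proof. by rewrite perpE dotBl dotZl f_u_perp_vv mulr0 subr0. Qed.

Lemma perp_vv : perp f q (f_vv f q) = f_vv f q.
Proof. by rewrite perpE dotC f_u_perp_vv scale0r subr0. Qed.

Lemma II_ffE X : II_ff f q X X =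
  X 0 0 ^+ 2 *: perp f q (f_uu f q) + (2 * (X 0 0 * X 0 1)) *: perp f q (f_uv f q)
  + X 0 1 ^+ 2 *: f_vv f q.
Proof.
rewrite /II_ff [X in _ + _ *: X]perp_vv -!expr2.
by have -> : X 0 0 * X 0 1 + X 0 1 * X 0 0 = 2 * (X 0 0 * X 0 1) by ring.
Qed.

Lemma curvature_parabola_quadratic_curve t :
  curvature_parabola f q
    (quadratic_curve (perp f q (f_uu f q)) (perp f q (f_uv f q)) (f_vv f q) t).
Proof.
exists (slope_vec t); first by rewrite /= I_ffE slope_vec_u expr1n.
by rewrite II_ffE slope_vec_u slope_vec_v expr1n scale1r mul1r.
Qed.

Hypothesis (f_vv_unit : dot (f_vv f q) (f_vv f q) = 1).

Lemma dot_perp_combination_vv (a b : 'rV[R]_3) (x y z : R) :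
  dot (x *: perp f q a + y *: perp f q b + z *: f_vv f q) (f_vv f q) =
  x * dot a (f_vv f q) + y * dot b (f_vv f q) + z.
Proof. by rewrite !dotDl !dotZl (dot_perp_vv a) (dot_perp_vv b) f_vv_unit mulr1. Qed.

Lemma axial_curvature_setE :
  [set dot (II_ff f q X X) (f_vv f q) | X in [set X | I_ff f q X X = 1]] =
  [set X 0 0 ^+ 2 * dot (f_uu f q) (f_vv f q)
       + 2 * (X 0 0 * X 0 1) * dot (f_uv f q) (f_vv f q) + X 0 1 ^+ 2
   | X in [set X : 'rV[R]_2 | X 0 0 ^+ 2 = 1]].
Proof.
have -> : [set X | I_ff f q X X = 1] = [set X | X 0 0 ^+ 2 = 1].
  by apply/funext => X /=; rewrite I_ffE.
by apply: eq_imagel => X _; rewrite II_ffE dot_perp_combination_vv.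
Qed.

End FundamentalForms.

Theorem mainTheorem3 (R : realType) (f : 'rV[R]_2 -> 'rV[R]_3) (q : 'rV[R]_2) :
  smooth f ->
  corank1 f q ->
  nondegenerate_parabola (curvature_parabola f q) \/
    half_line (curvature_parabola f q) ->
  f_u f q != 0 ->
  f_v f q = 0 ->
  Num.sqrt (dot (f_u f q) (f_u f q)) = 1 ->
  Num.sqrt (dot (f_vv f q) (f_vv f q)) = 1 ->
  dot (f_u f q) (f_vv f q) = 0 ->
  forall va : 'rV[R]_3, axial_vector (curvature_parabola f q) va ->
  is_axial_curvature f q va
    (dot (f_uu f q) (f_vv f q) - (dot (f_uv f q) (f_vv f q)) ^+ 2).
Proof.
move=> f_smooth _ _ _ f_v0 /dot_eq1_of_sqrt f_u_unit /dot_eq1_of_sqrt f_vv_unit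
  f_u_perp_vv va axial_va.
have f_diff : differentiable f q := f_smooth [::] q.
have D_curve := curvature_parabola_quadratic_curve f_diff f_v0 f_u_unit f_u_perp_vv.
rewrite (axial_vector_quadratic_curve f_vv_unit D_curve axial_va).
rewrite /is_axial_curvature axial_curvature_setE //.
exact: is_min_quadratic.
Qed.
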